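(* Let $\Lambda$ be a row-finite strongly aperiodic $k$-graph with no sources, and define $\beta$ on $\Lambda^\infty$ by $\beta(x)=\{v\in\Lambda^0: v\Lambda x(n,n)\neq\emptyset \text{ for some } n\in\mathbb{N}^k\}$. Then: (A) for every $x\in\Lambda^\infty$, $\beta(x)$ is a maximal tail; (B) $\beta:\Lambda^\infty\to\chi_\Lambda$ is a continuous, open surjection, and $\chi_\Lambda$ is a quotient space of $\Lambda^\infty$; (C) for every $v\in\Lambda^0$, the open set $S(v)=\{\chi\in\chi_\Lambda: v\in\chi\}$ is a compact subset of $\chi_\Lambda$.
   Context: A $k$-graph is a countable category $\Lambda$ with a functor $d:\Lambda\to\mathbb{N}^k$ satisfying the factorization property: whenever $d(\lambda)=m+n$ there are unique $\mu,\nu$ with $\lambda=\mu\nu$, $d(\mu)=m$, $d(\nu)=n$. $\Lambda^n=d^{-1}(n)$, $\Lambda^0$ the vertices, $r,s$ range and source, $v\Lambda^n=\{\lambda:r(\lambda)=v,d(\lambda)=n\}$, $v\Lambda w=\{\lambda:r(\lambda)=v,s(\lambda)=w\}$. Row-finite: each $v\Lambda^n$ finite; no sources: $v\Lambda^{e_i}\neq\emptyset$ for all $v,i$. For $0\le m\le n\le d(\lambda)$, $\lambda(m,n)$ is the unique path with $\lambda=\lambda'\lambda(m,n)\lambda''$, $d(\lambda')=m$, $d(\lambda(m,n))=n-m$. $v\le w$ means $v\Lambda w\ne\emptyset$; $H\subseteq\Lambda^0$ is hereditary if $v\in H$, $v\le w$ imply $w\in H$; saturated if for every $v$: $r^{-1}(v)\ne\emptyset$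 and $\{s(\lambda):\lambda\in v\Lambda^{e_i}\}\subseteq H$ for some $i$ imply $v\in H$. For saturated hereditary $H\subsetneq\Lambda^0$, $\Gamma(\Lambda\setminus H)$ is the $k$-graph with vertices $\Lambda^0\setminus H$ and morphisms $\{\lambda:s(\lambda)\notin H\}$. No local periodicity at $v$: for each $m\ne n\in\mathbb{N}^k$ there is $\lambda\in v\Lambda$ with $d(\lambda)\ge m\vee n$ and $\lambda(m,m+d(\lambda)-(m\vee n))\ne\lambda(n,n+d(\lambda)-(m\vee n))$; aperiodic: no local periodicity at every vertex; strongly aperiodic: every $\Gamma(\Lambda\setminus H)$ ($H\subsetneq\Lambda^0$ saturated hereditary) aperiodic. $\Omega_k$ is the $k$-graph with objects $\mathbb{N}^k$, morphisms $\{(m,n): m\le n\}$, $r(m,n)=m$, $s(m,n)=n$, $(m,n)(n,p)=(m,p)$, $d(m,n)=n-m$. The infinite path space $\Lambda^\infty$ is the set of degree-preserving functors $x:\Omega_k\to\Lambda$, with the topology having basis the sets $Z(\lambda)=\{x: x(0,d(\lambda))=\lambda\}$, $\lambda\in\Lambda$. A nonempty $\gamma\subseteq\Lambda^0$ is a maximal tail if (a) for all $v_1,v_2\in\gamma$ there is $w\in\gamma$ with $v_1\Lambda w\ne\emptyset$, $v_2\Lambda w\ne\emptyset$; (b) for every $v\in\gamma$ and $1\le i\le k$ there is $e\in v\Lambda^{e_i}$ with $s(e)\in\gamma$; (c) if $w\in\gamma$ and $v\Lambda w\ne\emptyset$ then $v\in\gamma$. $\chi_\Lambda$ is the set of maximal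 tails, topologized so that the closure of $S\subseteq\chi_\Lambda$ is $\{\delta\in\chi_\Lambda:\delta\subseteq\bigcup_{\gamma\in S}\gamma\}$; equivalently, the topology with base $\{S(v):v\in\Lambda^0\}$ where $S(v)=\{\chi\in\chi_\Lambda:v\in\chi\}$. *)

From Stdlib Require List.
From mathcomp Require Import all_boot.

Set Implicit Arguments.
Unset Strict Implicit.
Unset Printing Implicit Defensive.

Definition Nk (k : nat) := {ffun 'I_k -> nat}.
Definition zeroN (k : nat) : Nk k := [ffun _ => 0].
Definition addN (k : nat) (m n : Nk k) : Nk k := [ffun i => m i + n i].
Definition subN (k : nat) (m n : Nk k) : Nk k := [ffun i => m i - n i].
Definition joinN (k : nat) (m n : Nk k) : Nk k := [ffun i => maxn (m i) (n i)].
Definition leN (k : nat) (m n : Nk k) : Prop := forall i, m i <= n i.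
Definition unitN (k : nat) (i : 'I_k) : Nk k := [ffun j => nat_of_bool (j == i)].

(* A countable category (objects [vert], morphisms [path], composition [comp]
   meaningful on composable pairs), with a functor [deg] to N^k satisfying the
   unique factorization property.  Vertices Lambda^0 = deg^-1(0) are identified
   with the objects via [idp]. *)
Record kgraph (k : nat) : Type := KGraph {
  vert : Type;
  path : Type;
  vert_countable : exists f : vert -> nat, injective f;
  path_countable : exists f : path -> nat, injective f;
  rng : path -> vert;
  src : path -> vert;
  idp : vert -> path;
  comp : path -> path -> path;
  deg : path -> Nk k;
  rng_idp : forall v, rng (idp v) = v;
  src_idp : forall v, src (idp v) = v;
  rng_comp : forall mu nu, src mu = rng nu -> rng (comp mu nu) = rng mu;
  src_comp : forall mu nu, src mu = rng nu -> src (comp mu nu) = src nu;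
  comp_idl : forall mu, comp (idp (rng mu)) mu = mu;
  comp_idr : forall mu, comp mu (idp (src mu)) = mu;
  comp_assoc : forall a b c, src a = rng b -> src b = rng c ->
    comp a (comp b c) = comp (comp a b) c;
  deg_idp : forall v, deg (idp v) = zeroN k;
  deg_comp : forall mu nu, src mu = rng nu ->
    deg (comp mu nu) = addN (deg mu) (deg nu);
  factorization : forall lam (m n : Nk k), deg lam = addN m n ->
    exists mu nu,
      (src mu = rng nu /\ lam = comp mu nu /\ deg mu = m /\ deg nu = n) /\
      (forall mu' nu', src mu' = rng nu' -> lam = comp mu' nu' ->
         deg mu' = m -> deg nu' = n -> mu' = mu /\ nu' = nu)
}.

Arguments vert {k} _.
Arguments path {k} _.
Arguments rng {k _} _.
Arguments src {k _} _.
Arguments idp {k _} _.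
Arguments comp {k _} _ _.
Arguments deg {k _} _.

Section KGraphNotions.
Variables (k : nat) (L : kgraph k).

Definition vle (v w : vert L) : Prop := exists lam : path L, rng lam = v /\ src lam = w.

Definition row_finite : Prop :=
  forall (v : vert L) (n : Nk k),
    exists s : seq (path L), forall lam, rng lam = v -> deg lam = n -> List.In lam s.

Definition no_sources : Prop :=
  forall (v : vert L) (i : 'I_k), exists lam : path L, rng lam = v /\ deg lam = unitN i.

(* [segment lam m n sigma] : sigma = lam(m,n), i.e. lam = lam' sigma lam''
   with d(lam') = m and d(sigma) = n - m. *)
Definition segment (lam : path L) (m n : Nk k) (sigma : path L) : Prop :=
  exists lam' lam'' : path L,
    src lam' = rng sigma /\ src sigma = rng lam'' /\
    lam = comp (comp lam' sigma) lam'' /\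
    deg lam' = m /\ deg sigma = subN n m.

(* No local periodicity at v in the subgraph of paths whose source satisfies
   [C] (C = everything: Lambda itself; C = complement of H: Gamma(Lambda\H)). *)
Definition no_local_periodicity_in (C : vert L -> Prop) (v : vert L) : Prop :=
  forall m n : Nk k, m <> n ->
    exists lam : path L,
      rng lam = v /\ C (src lam) /\ leN (joinN m n) (deg lam) /\
      forall sigma tau,
        segment lam m (addN m (subN (deg lam) (joinN m n))) sigma ->
        segment lam n (addN n (subN (deg lam) (joinN m n))) tau ->
        sigma <> tau.

Definition aperiodic : Prop :=
  forall v : vert L, no_local_periodicity_in (fun _ => True) v.

Definition hereditary (H : vert L -> Prop) : Prop :=
  forall v w, H v -> vle v w -> H w.

Definition saturated (H : vert L -> Prop) : Prop :=
  forall v : vert L,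
    (exists lam : path L, rng lam = v) ->
    (exists i : 'I_k, forall lam : path L,
        rng lam = v -> deg lam = unitN i -> H (src lam)) ->
    H v.

(* Gamma(Lambda \ H) has vertices outside H and paths with source outside H;
   its aperiodicity is no local periodicity (within it) at each vertex v
   outside H. *)
Definition Gamma_aperiodic (H : vert L -> Prop) : Prop :=
  forall v : vert L, ~ H v -> no_local_periodicity_in (fun w => ~ H w) v.

Definition strongly_aperiodic : Prop :=
  forall H : vert L -> Prop,
    saturated H -> hereditary H -> (exists v, ~ H v) -> Gamma_aperiodic H.

(* ---------- infinite paths: degree-preserving functors Omega_k -> Lambda ----
   [xo] is the object map, [xm m n] the image of the morphism (m,n) (only
   meaningful for m <= n). *)
Record infpath : Type := InfPath {
  xo : Nk k -> vert L;
  xm : Nk k -> Nk k -> path L;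
  xm_rng : forall m n, leN m n -> rng (xm m n) = xo m;
  xm_src : forall m n, leN m n -> src (xm m n) = xo n;
  xm_deg : forall m n, leN m n -> deg (xm m n) = subN n m;
  xm_id : forall m, xm m m = idp (xo m);
  xm_comp : forall m n p, leN m n -> leN n p -> xm m p = comp (xm m n) (xm n p)
}.

Definition Zcyl (lam : path L) (x : infpath) : Prop :=
  xm x (zeroN k) (deg lam) = lam.

Definition open_inf (W : infpath -> Prop) : Prop :=
  forall x, W x -> exists lam, Zcyl lam x /\ forall y, Zcyl lam y -> W y.

Definition maximal_tail (g : vert L -> Prop) : Prop :=
  (exists v, g v) /\
  (forall v1 v2, g v1 -> g v2 -> exists w, g w /\ vle v1 w /\ vle v2 w) /\
  (forall v, g v -> forall i : 'I_k,
      exists e : path L, rng e = v /\ deg e = unitN i /\ g (src e)) /\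
  (forall v w, g w -> vle v w -> g v).

(* Subsets of chi_Lambda are predicates on vertex sets, read on maximal tails
   only.  S(v) = { chi | v in chi }. *)
Definition Sv (v : vert L) (g : vert L -> Prop) : Prop := maximal_tail g /\ g v.

Definition open_chi (U : (vert L -> Prop) -> Prop) : Prop :=
  forall g, maximal_tail g -> U g ->
    exists v, g v /\ forall g', maximal_tail g' -> g' v -> U g'.

Definition compact_chi (K : (vert L -> Prop) -> Prop) : Prop :=
  forall (I : Type) (F : I -> (vert L -> Prop) -> Prop),
    (forall i, open_chi (F i)) ->
    (forall g, maximal_tail g -> K g -> exists i, F i g) ->
    exists s : seq I, forall g, maximal_tail g -> K g ->
      exists i, List.In i s /\ F i g.

Definition beta (x : infpath) : vert L -> Prop :=
  fun v => exists n : Nk k, vle v (xo x n).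

End KGraphNotions.

Arguments infpath {k} _.

(* beta(x) is the downward closure of the vertices x(j1, j1) (1 = (1,...,1)),
   and the downward closure of any chain of vertices joined by paths of degree
   1 is a maximal tail.  Conversely, given a maximal tail g and a path lam with
   source in g, enumerate the vertices and extend lam inside g, at step j by a
   path of degree >= 1 whose source lies above the j-th vertex if that vertex
   is in g; the increasing paths obtained define an infinite path x in Z(lam)
   with beta(x) = g.  So beta maps Z(lam) onto S(s(lam)), which gives
   surjectivity, openness and the quotient property.  For compactness of S(v),
   row-finiteness shows that a vertex without finite subcover has, in every
   direction, an edge to another such vertex; a chain of them starting at v
   spans a tail in S(v) covered by a single open set, a contradiction. *)

From mathcomp Require Import all_boot.
From Stdlib Require Import Classical ClassicalEpsilon FunctionalExtensionality PropExtensionality.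

Set Implicit Arguments.
Unset Strict Implicit.
Unset Printing Implicit Defensive.

Section NkArith.
Variable k : nat.
Implicit Types m n p : Nk k.

Definition diagN (j : nat) : Nk k := [ffun _ => j].
Definition heightN n : nat := \max_(i : 'I_k) n i.

Lemma addN_subN m n : leN m n -> addN m (subN n m) = n.
Proof. by move=> h; apply/ffunP => i; rewrite !ffunE subnKC. Qed.

Lemma subN_addN m n : subN (addN m n) m = n.
Proof. by apply/ffunP => i; rewrite !ffunE addKn. Qed.

Lemma addNI m n p : addN m n = addN m p -> n = p.
Proof.
move=> h; apply/ffunP => i; have := congr1 (fun f : Nk k => f i) h.
by rewrite !ffunE => /addnI.
Qed.

Lemma add0N n : addN (zeroN k) n = n.
Proof. by apply/ffunP => i; rewrite !ffunE. Qed.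

Lemma subN0 n : subN n (zeroN k) = n.
Proof. by apply/ffunP => i; rewrite !ffunE subn0. Qed.

Lemma subNN n : subN n n = zeroN k.
Proof. by apply/ffunP => i; rewrite !ffunE subnn. Qed.

Lemma leN0 n : leN (zeroN k) n.
Proof. by move=> i; rewrite ffunE. Qed.

Lemma leN_refl n : leN n n.
Proof. by []. Qed.

Lemma leN_trans m n p : leN m n -> leN n p -> leN m p.
Proof. by move=> h1 h2 i; apply: leq_trans (h1 i) (h2 i). Qed.

Lemma leN_addr m n : leN m (addN m n).
Proof. by move=> i; rewrite ffunE leq_addr. Qed.

Lemma leN_diag_height n : leN n (diagN (heightN n)).
Proof. by move=> i; rewrite ffunE (leq_bigmax i). Qed.

Lemma subN_diagS j : subN (diagN j.+1) (diagN j) = diagN 1.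
Proof. by apply/ffunP => i; rewrite !ffunE subSnn. Qed.

Definition degs (s : seq 'I_k) : Nk k := foldr (fun i n => addN (unitN i) n) (zeroN k) s.

Lemma degs_enum : degs (enum 'I_k) = diagN 1.
Proof.
suff degs_count s i : degs s i = count_mem i s.
  by apply/ffunP => i; rewrite degs_count count_uniq_mem ?enum_uniq // mem_enum ffunE.
by elim: s => [|j s IH] /=; rewrite !ffunE // IH eq_sym.
Qed.

End NkArith.

Section KGraphFacts.
Variables (k : nat) (L : kgraph k).
Implicit Types (lam mu nu : path L) (u v w : vert L).

Lemma deg0_idp lam : deg lam = zeroN k -> lam = idp (rng lam).
Proof.
move=> h0; have hd : deg lam = addN (zeroN k) (zeroN k) by rewrite h0 add0N.
have [mu [nu [_ uniq_fact]]] := factorization hd.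
have [-> _] := uniq_fact _ _ (src_idp _) (esym (comp_idl lam)) (deg_idp _) h0.
by have [-> _] := uniq_fact _ _ (esym (rng_idp _)) (esym (comp_idr lam)) h0 (deg_idp _).
Qed.

Lemma comp_inj mu nu mu' nu' :
  src mu = rng nu -> src mu' = rng nu' -> comp mu nu = comp mu' nu' ->
  deg mu = deg mu' -> mu = mu' /\ nu = nu'.
Proof.
move=> h h' e hd; have d := deg_comp h.
have hdnu : deg nu = deg nu' by apply: (@addNI _ (deg mu)); rewrite -d e deg_comp // hd.
have [a [b [_ uniq_fact]]] := factorization d.
have [-> ->] := uniq_fact mu nu h erefl erefl erefl.
by have [-> ->] := uniq_fact mu' nu' h' e (esym hd) (esym hdnu).
Qed.

Lemma exists_factor lam n : leN n (deg lam) ->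
  exists mu nu, src mu = rng nu /\ lam = comp mu nu /\ deg mu = n.
Proof.
move=> h; have hd : deg lam = addN n (subN (deg lam) n) by rewrite addN_subN.
by have [mu [nu [[? [? [? _]]] _]]] := factorization hd; exists mu, nu.
Qed.

Lemma vle_refl v : vle v v.
Proof. by exists (idp v); rewrite rng_idp src_idp. Qed.

Lemma vle_trans u v w : vle u v -> vle v w -> vle u w.
Proof.
move=> [a [<- ha]] [b [hb <-]].
have h : src a = rng b by rewrite ha hb.
by exists (comp a b); rewrite rng_comp // src_comp.
Qed.

Lemma vle_src lam : vle (rng lam) (src lam).
Proof. by exists lam. Qed.

Lemma edge_of_deg_pos lam (i : 'I_k) : 0 < deg lam i ->
  exists e r, rng e = rng lam /\ deg e = unitN i /\ src e = rng r /\ src r = src lam.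
Proof.
move=> h; have hle : leN (unitN i) (deg lam).
  by move=> j; rewrite ffunE; case: eqP => [->|].
have [e [r [her [-> hde]]]] := exists_factor hle.
by exists e, r; rewrite rng_comp // src_comp.
Qed.

Definition factor lam n : path L * path L :=
  epsilon (inhabits (lam, lam))
    (fun p => src p.1 = rng p.2 /\ lam = comp p.1 p.2 /\ deg p.1 = n).
Definition prefix lam n := (factor lam n).1.
Definition suffix lam n := (factor lam n).2.

Lemma factorP lam n : leN n (deg lam) ->
  src (prefix lam n) = rng (suffix lam n) /\
  lam = comp (prefix lam n) (suffix lam n) /\ deg (prefix lam n) = n.
Proof.
move=> h; apply: (epsilon_spec (inhabits (lam, lam)) (fun p : path L * path L =>
  src p.1 = rng p.2 /\ lam = comp p.1 p.2 /\ deg p.1 = n)).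
by have [mu [nu hmu]] := exists_factor h; exists (mu, nu).
Qed.

Lemma factor_comp mu nu : src mu = rng nu ->
  prefix (comp mu nu) (deg mu) = mu /\ suffix (comp mu nu) (deg mu) = nu.
Proof.
move=> h; have hle : leN (deg mu) (deg (comp mu nu)) by rewrite deg_comp //; apply: leN_addr.
have [h1 [h2 h3]] := factorP hle.
by have [-> ->] := comp_inj h1 h (esym h2) h3.
Qed.

Lemma prefix_deg lam : prefix lam (deg lam) = lam.
Proof.
have := (factor_comp (esym (rng_idp (src lam)))).1.
by rewrite comp_idr.
Qed.

Lemma suffix0 lam : suffix lam (zeroN k) = lam.
Proof.
have := (factor_comp (src_idp (rng lam))).2.
by rewrite comp_idl deg_idp.
Qed.

Lemma prefix_comp lam nu n : leN n (deg lam) -> src lam = rng nu ->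
  prefix (comp lam nu) n = prefix lam n.
Proof.
move=> hn h; have [h1 [h2 h3]] := factorP hn.
have hb : src (suffix lam n) = rng nu by rewrite -h [in RHS]h2 src_comp.
have hab : src (prefix lam n) = rng (comp (suffix lam n) nu) by rewrite rng_comp.
have := (factor_comp hab).1; rewrite h3 => <-.
by rewrite [in LHS]h2 -comp_assoc.
Qed.

Lemma prefix_prefix lam m n : leN m n -> leN n (deg lam) ->
  prefix (prefix lam n) m = prefix lam m.
Proof.
move=> hmn hn; have [h1 [h2 h3]] := factorP hn.
by rewrite [in RHS]h2 prefix_comp // h3.
Qed.

Definition forward_closed (Q : vert L -> Prop) : Prop :=
  forall u, Q u -> forall i : 'I_k,
    exists e : path L, rng e = u /\ deg e = unitN i /\ Q (src e).

Lemma forward_closed_path Q u : forward_closed Q -> Q u ->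
  exists lam, rng lam = u /\ deg lam = diagN k 1 /\ Q (src lam).
Proof.
move=> hQ; rewrite -degs_enum; elim: (enum 'I_k) u => [|i s IH] u hu.
  by exists (idp u); rewrite rng_idp deg_idp src_idp.
have [e [<- [hde hQe]]] := hQ u hu i.
have [p [hp [hdp hQp]]] := IH _ hQe.
by exists (comp e p); rewrite rng_comp ?deg_comp ?src_comp // hde hdp.
Qed.

Definition chain_tail (c : nat -> vert L) : vert L -> Prop :=
  fun w => exists j, vle w (c j).

Section Chain.
Variable c : nat -> vert L.
Hypothesis chain_step : forall j,
  exists lam, rng lam = c j /\ src lam = c j.+1 /\ deg lam = diagN k 1.

Lemma chain_vle j j' : j <= j' -> vle (c j) (c j').
Proof.
move=> /subnKC <-; elim: (j' - j) => [|d IH]; first by rewrite addn0; apply: vle_refl.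
have [lam [hr [hs _]]] := chain_step (j + d).
by rewrite addnS; apply: vle_trans IH _; rewrite -hr -hs; apply: vle_src.
Qed.

Lemma chain_tail_maximal : maximal_tail (chain_tail c).
Proof.
split; first by exists (c 0), 0; apply: vle_refl.
split.
  move=> w1 w2 [a h1] [b h2]; exists (c (maxn a b)).
  split; first by exists (maxn a b); apply: vle_refl.
  by split; [apply: vle_trans h1 _ | apply: vle_trans h2 _];
    apply: chain_vle; rewrite ?leq_maxl ?leq_maxr.
split; last by move=> u w [j hw] huw; exists j; apply: vle_trans huw hw.
move=> w [j [mu [<- hmu]]] i.
have [p [hp [hsp hdp]]] := chain_step j.
have hmp : src mu = rng p by rewrite hmu hp.
have hpos : 0 < deg (comp mu p) i by rewrite deg_comp // !ffunE hdp ffunE addn1.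
have [e [r [he [hde [her hr]]]]] := edge_of_deg_pos hpos.
exists e; rewrite he rng_comp //; split=> //; split=> //.
by exists j.+1, r; rewrite hr src_comp.
Qed.

End Chain.

Lemma vle_xo (x : infpath L) m n : leN m n -> vle (xo x m) (xo x n).
Proof. by move=> h; exists (xm x m n); rewrite xm_rng // xm_src. Qed.

Lemma beta_chain_tail (x : infpath L) :
  beta x = chain_tail (fun j => xo x (diagN k j)).
Proof.
apply: functional_extensionality => w; apply: propositional_extensionality.
split=> [[n hw]|[j hw]]; last by exists (diagN k j).
by exists (heightN n); apply: vle_trans hw (vle_xo x (leN_diag_height n)).
Qed.

Lemma beta_maximal_tail (x : infpath L) : maximal_tail (beta x).
Proof.
rewrite beta_chain_tail; apply: chain_tail_maximal => j.
have hj : leN (diagN k j) (diagN k j.+1) by move=> i; rewrite !ffunE.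
exists (xm x (diagN k j) (diagN k j.+1)).
by rewrite xm_rng // xm_src // xm_deg // subN_diagS.
Qed.

Lemma Zcyl_src lam (x : infpath L) : Zcyl lam x -> xo x (deg lam) = src lam.
Proof. by move=> h; rewrite -[in RHS]h xm_src //; apply: leN0. Qed.

Lemma beta_Zcyl lam (x : infpath L) : Zcyl lam x -> beta x (src lam).
Proof. by move=> /Zcyl_src <-; exists (deg lam); apply: vle_refl. Qed.

Lemma beta_continuous (U : (vert L -> Prop) -> Prop) :
  open_chi U -> open_inf (fun x : infpath L => U (beta x)).
Proof.
move=> hU x hx; have [v [[n hv] hSv]] := hU _ (beta_maximal_tail x) hx.
have hn : deg (xm x (zeroN k) n) = n by rewrite xm_deg ?subN0 //; apply: leN0.
exists (xm x (zeroN k) n); split; first by rewrite /Zcyl hn.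
move=> y hy; apply: hSv; first exact: beta_maximal_tail.
by exists n; rewrite -{1}hn Zcyl_src // xm_src //; apply: leN0.
Qed.

Lemma forward_chain Q v : forward_closed Q -> Q v ->
  exists c : nat -> vert L, c 0 = v /\ (forall j, Q (c j)) /\
    forall j, exists lam, rng lam = c j /\ src lam = c j.+1 /\ deg lam = diagN k 1.
Proof.
move=> hQ hv.
pose R u u' := exists lam, rng lam = u /\ src lam = u' /\ deg lam = diagN k 1 /\ Q u'.
pose next u := epsilon (inhabits v) (R u).
have hnext u : Q u -> R u (next u).
  move=> hu; apply: epsilon_spec.
  by have [lam [? [? ?]]] := forward_closed_path hQ hu; exists (src lam), lam.
have hQc j : Q (iter j next v).
  by elim: j => [|j IH] //=; have [lam [_ [_ [_ ?]]]] := hnext _ IH.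
exists (fun j => iter j next v); split=> //; split=> // j.
by have [lam [? [? [? _]]]] := hnext _ (hQc j); exists lam.
Qed.

Section Compactness.
Variables (I : Type) (F : I -> (vert L -> Prop) -> Prop).

Definition finitely_covered (u : vert L) : Prop :=
  exists s : seq I, forall g, maximal_tail g -> g u -> exists i, List.In i s /\ F i g.

Lemma finitely_covered_srcs (P : path L -> Prop) (ls : seq (path L)) :
  (forall e, List.In e ls -> P e -> finitely_covered (src e)) ->
  exists s : seq I, forall e, List.In e ls -> P e ->
    forall g, maximal_tail g -> g (src e) -> exists i, List.In i s /\ F i g.
Proof.
elim: ls => [|e ls IH] hcov; first by exists nil.
have [s hs] := IH (fun e' he' => hcov e' (or_intror he')).
have [hPe|hPe] := classic (P e); last first.
  by exists s => e' [<-|he'] //; apply: hs.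
have [s' hs'] := hcov e (or_introl erefl) hPe.
exists (s' ++ s) => e' [<-|he'] hPe' g hg hge.
  by have [i [hi hFi]] := hs' g hg hge; exists i; split=> //; apply: List.in_or_app; left.
have [i [hi hFi]] := hs e' he' hPe' g hg hge.
by exists i; split=> //; apply: List.in_or_app; right.
Qed.

Lemma uncovered_forward_closed :
  row_finite L -> forward_closed (fun u => ~ finitely_covered u).
Proof.
move=> hrf u hu i; apply: NNPP => hedges; apply: hu.
have [ls hls] := hrf u (unitN i).
have [|s hs] := @finitely_covered_srcs (fun e => rng e = u /\ deg e = unitN i) ls.
  by move=> e _ [he hde]; apply: NNPP => hcov; apply: hedges; exists e.
exists s => g hg hgu; have [_ [_ [hfwd _]]] := hg.
have [e [he [hde hge]]] := hfwd u hgu i.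
exact: hs e (hls e he hde) (conj he hde) g hg hge.
Qed.

End Compactness.

(* If [v] had no finite subcover, the uncovered vertices would contain a
   chain from [v]; its tail lies in one [F i], hence in a basic set [S(w)]
   with [w] below some vertex of the chain, which is then covered by [i]. *)
Lemma Sv_compact v : row_finite L -> compact_chi (Sv v).
Proof.
move=> hrf I F hFopen hFcov.
suff [s hs] : finitely_covered F v by exists s => g hg [_ hgv]; apply: hs.
apply: NNPP => hv.
have [c [hc0 [hcQ hstep]]] := forward_chain (uncovered_forward_closed hrf (F := F)) hv.
have hT := chain_tail_maximal hstep.
have hTv : chain_tail c v by exists 0; rewrite hc0; apply: vle_refl.
have [i hi] := hFcov _ hT (conj hT hTv).
have [w [[j hw] hSw]] := hFopen i _ hT hi.
apply: (hcQ j); exists [:: i] => g hg hgc; exists i; split; first by left.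
by apply: hSw => //; have [_ [_ [_ hdown]]] := hg; apply: hdown hgc hw.
Qed.

Section CoherentPrefixes.
Variable P : Nk k -> path L.
Hypothesis deg_P : forall n, deg (P n) = n.
Hypothesis prefix_P : forall m n, leN m n -> prefix (P n) m = P m.

Lemma coherent_factor m n : leN m n ->
  src (P m) = rng (suffix (P n) m) /\ P n = comp (P m) (suffix (P n) m).
Proof.
move=> h; have hm : leN m (deg (P n)) by rewrite deg_P.
by have [h1 [h2 _]] := factorP hm; rewrite -(prefix_P h).
Qed.

Lemma coherent_rng m n : leN m n -> rng (suffix (P n) m) = src (P m).
Proof. by move=> /coherent_factor []. Qed.

Lemma coherent_src m n : leN m n -> src (suffix (P n) m) = src (P n).
Proof. by move=> /coherent_factor [h1 h2]; rewrite [in RHS]h2 src_comp. Qed.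

Lemma coherent_deg m n : leN m n -> deg (suffix (P n) m) = subN n m.
Proof.
move=> /coherent_factor [h1 h2]; have := congr1 deg h2.
by rewrite deg_comp // !deg_P => {2}->; rewrite subN_addN.
Qed.

Lemma coherent_id m : suffix (P m) m = idp (src (P m)).
Proof.
have hd := coherent_deg (leN_refl m); rewrite subNN in hd.
by rewrite (deg0_idp hd) coherent_rng.
Qed.

Lemma coherent_comp m n p : leN m n -> leN n p ->
  suffix (P p) m = comp (suffix (P n) m) (suffix (P p) n).
Proof.
move=> hmn hnp; have hmp := leN_trans hmn hnp.
have [a1 a2] := coherent_factor hmp.
have [b1 b2] := coherent_factor hnp.
have [c1 c2] := coherent_factor hmn.
have hmid : src (suffix (P n) m) = rng (suffix (P p) n) by rewrite coherent_src ?coherent_rng.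
have hc : src (P m) = rng (comp (suffix (P n) m) (suffix (P p) n)) by rewrite rng_comp.
have e : comp (P m) (suffix (P p) m) = comp (P m) (comp (suffix (P n) m) (suffix (P p) n)).
  by rewrite -a2 [in LHS]b2 [in LHS]c2 comp_assoc.
by have [_ ->] := comp_inj a1 hc e erefl.
Qed.

Lemma infpath_of_coherent : exists y : infpath L, forall n, xm y (zeroN k) n = P n.
Proof.
exists (InfPath coherent_rng coherent_src coherent_deg coherent_id coherent_comp).
by move=> n /=; rewrite suffix0.
Qed.

End CoherentPrefixes.

Section IncreasingPaths.
Variable ls : nat -> path L.
Hypothesis ls_step : forall j, exists r, src (ls j) = rng r /\ ls j.+1 = comp (ls j) r.
Hypothesis ls_deg : forall j, leN (diagN k j) (deg (ls j)).

Lemma extend_increasing j j' : j <= j' -> exists r, src (ls j) = rng r /\ ls j' = comp (ls j) r.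
Proof.
move=> /subnKC <-; elim: (j' - j) => [|d [r [hr e]]].
  by exists (idp (src (ls j))); rewrite rng_idp addn0 comp_idr.
have [r' [hr' e']] := ls_step (j + d).
have hrr' : src r = rng r' by rewrite -hr' e src_comp.
by exists (comp r r'); rewrite rng_comp // addnS e' e comp_assoc.
Qed.

Lemma prefix_increasing j j' n : j <= j' -> leN n (deg (ls j)) ->
  prefix (ls j') n = prefix (ls j) n.
Proof. by move=> /extend_increasing [r [hr ->]] hn; apply: prefix_comp. Qed.

Definition limit_prefix n := prefix (ls (heightN n)) n.

Lemma leN_deg_ls_height n : leN n (deg (ls (heightN n))).
Proof. exact: leN_trans (leN_diag_height n) (ls_deg _). Qed.

Lemma limit_prefixE n j : leN n (deg (ls j)) -> limit_prefix n = prefix (ls j) n.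
Proof.
move=> hn; rewrite /limit_prefix; case: (leqP (heightN n) j) => hj.
  by rewrite (prefix_increasing hj) //; apply: leN_deg_ls_height.
by rewrite (prefix_increasing (ltnW hj)).
Qed.

Lemma deg_limit_prefix n : deg (limit_prefix n) = n.
Proof. by have [_ [_ ->]] := factorP (leN_deg_ls_height n). Qed.

Lemma prefix_limit_prefix m n : leN m n -> prefix (limit_prefix n) m = limit_prefix m.
Proof.
move=> hmn; have hn := leN_deg_ls_height n.
by rewrite prefix_prefix // (limit_prefixE (leN_trans hmn hn)).
Qed.

Lemma infpath_through_increasing : exists y : infpath L, forall j, Zcyl (ls j) y.
Proof.
have [y hy] := infpath_of_coherent deg_limit_prefix prefix_limit_prefix.
exists y => j; rewrite /Zcyl hy (limit_prefixE (leN_refl _)); exact: prefix_deg.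
Qed.

End IncreasingPaths.

Lemma tail_extension g u (W : vert L -> Prop) :
  maximal_tail g -> g u -> (forall w w', W w -> W w' -> w = w') ->
  exists r, rng r = u /\ g (src r) /\ leN (diagN k 1) (deg r) /\
    forall w, g w -> W w -> vle w (src r).
Proof.
move=> [_ [hdir [hfwd _]]] hu hW.
have [[w [hgw hWw]]|hnoW] := classic (exists w, g w /\ W w); last first.
  have [p [hp [hdp hgp]]] := forward_closed_path hfwd hu.
  exists p; rewrite hdp; split=> //; split=> //; split=> // w hgw hWw.
  by case: hnoW; exists w.
have [w' [hgw' [[mu [hmu hmuw']] hww']]] := hdir _ _ hu hgw.
have [p [hp [hdp hgp]]] := forward_closed_path hfwd hgw'.
have hmp : src mu = rng p by rewrite hmuw' hp.
exists (comp mu p); rewrite rng_comp // src_comp //; split=> //; split=> //.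
split; first by move=> i; rewrite deg_comp // hdp !ffunE addn1.
move=> w0 _ hWw0; rewrite (hW _ _ hWw0 hWw); apply: vle_trans hww' _.
by rewrite -hp; apply: vle_src.
Qed.

(* [f] enumerates the vertices; step [j] makes sure the source of the path
   lies above the [j]-th vertex whenever that vertex is in [g]. *)
Lemma exhausting_sequence (f : vert L -> nat) g lam :
  injective f -> maximal_tail g -> g (src lam) ->
  exists ls : nat -> path L, ls 0 = lam /\
    (forall j, g (src (ls j)) /\ leN (diagN k j) (deg (ls j))) /\
    (forall j, exists r, src (ls j) = rng r /\ ls j.+1 = comp (ls j) r /\
        forall w, g w -> f w = j -> vle w (src r)).
Proof.
move=> finj hg hlam.
pose Q j l l' := exists r, src l = rng r /\ l' = comp l r /\ g (src r) /\
  leN (diagN k 1) (deg r) /\ forall w, g w -> f w = j -> vle w (src r).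
pose next j l := epsilon (inhabits l) (Q j l).
have hnext j l : g (src l) -> Q j l (next j l).
  move=> hl; apply: epsilon_spec.
  have [|r [hr [? [? ?]]]] := @tail_extension g _ (fun w => f w = j) hg hl.
    by move=> w w' hw hw'; apply: finj; rewrite hw hw'.
  by exists (comp l r), r.
pose ls j := nat_rect (fun _ => path L) lam next j.
have inv j : g (src (ls j)) /\ leN (diagN k j) (deg (ls j)).
  elim: j => [|j [hgj hdj]]; first by split=> // i; rewrite ffunE.
  have -> : ls j.+1 = next j (ls j) by [].
  have [r [hr [-> [hgr [hdr _]]]]] := hnext j _ hgj.
  rewrite src_comp //; split=> // i; rewrite deg_comp // !ffunE -addn1.
  by apply: leq_add; [have := hdj i | have := hdr i]; rewrite ffunE.
exists ls; split=> //; split=> // j.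
by have [r [? [? [_ [_ ?]]]]] := hnext j _ (inv j).1; exists r.
Qed.

Lemma beta_onto_cylinder g lam : maximal_tail g -> g (src lam) ->
  exists y : infpath L, Zcyl lam y /\ beta y = g.
Proof.
move=> hg hlam; have [f finj] := vert_countable L.
have [ls [ls0 [inv hstep]]] := exhausting_sequence finj hg hlam.
have [|y hy] := @infpath_through_increasing ls _ (fun j => (inv j).2).
  by move=> j; have [r [? [? _]]] := hstep j; exists r.
exists y; split; first by rewrite -ls0.
have [_ [_ [_ hdown]]] := hg.
apply: functional_extensionality => w; apply: propositional_extensionality.
split=> [[n hw]|hgw].
  pose j := heightN n.
  have hn : leN n (deg (ls j)) := leN_trans (leN_diag_height n) (inv j).2.
  apply: hdown (inv j).1 (vle_trans hw _).
  by rewrite -(Zcyl_src (hy j)); apply: vle_xo.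
have [r [hr [e hwr]]] := hstep (f w).
exists (deg (ls (f w).+1)); rewrite Zcyl_src // e src_comp //.
exact: hwr.
Qed.

Lemma beta_surjective g : maximal_tail g -> exists x : infpath L, beta x = g.
Proof.
move=> hg; have [[v hv] _] := hg.
have [|y [_ hy]] := @beta_onto_cylinder g (idp v) hg; first by rewrite src_idp.
by exists y.
Qed.

Lemma beta_open (W : infpath L -> Prop) :
  open_inf W -> open_chi (fun g => exists x, W x /\ beta x = g).
Proof.
move=> hW g hg [x [hx <-]]; have [lam [hlam hZW]] := hW x hx.
exists (src lam); split; first exact: beta_Zcyl.
move=> g' hg' hg'lam; have [y [hy <-]] := beta_onto_cylinder hg' hg'lam.
by exists y; split=> //; apply: hZW.
Qed.

Lemma open_chi_of_preimage (U : (vert L -> Prop) -> Prop) :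
  open_inf (fun x : infpath L => U (beta x)) -> open_chi U.
Proof.
move=> /beta_open hU g hg hUg; have [x hx] := beta_surjective hg.
have [|v [hgv hSv]] := hU g hg; first by exists x; rewrite hx.
exists v; split=> // g' hg' hg'v.
by have [y [hUy <-]] := hSv g' hg' hg'v.
Qed.

Lemma Sv_open v : open_chi (Sv v).
Proof. by move=> g hg [_ hgv]; exists v. Qed.

End KGraphFacts.

Theorem proposition4p6 (k : nat) (L : kgraph k) :
  row_finite L -> strongly_aperiodic L -> no_sources L ->
  (* (A) *)
  (forall x : infpath L, maximal_tail (beta x)) /\
  (* (B) beta continuous, open, surjective; chi_Lambda a quotient of Lambda^infty *)
  ((forall U, open_chi U -> open_inf (fun x : infpath L => U (beta x))) /\
   (forall W : infpath L -> Prop, open_inf W ->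
      open_chi (fun g => exists x, W x /\ beta x = g)) /\
   (forall g, maximal_tail g -> exists x : infpath L, beta x = g) /\
   (forall U, open_chi U <-> open_inf (fun x : infpath L => U (beta x)))) /\
  (* (C) *)
  (forall v : vert L, open_chi (Sv v) /\ compact_chi (Sv v)).
Proof.
move=> hrf _ _.
split; first exact: beta_maximal_tail.
split.
  split; first exact: beta_continuous.
  split; first exact: beta_open.
  split; first exact: beta_surjective.
  by move=> U; split; [apply: beta_continuous | apply: open_chi_of_preimage].
by move=> v; split; [apply: Sv_open | apply: Sv_compact].
Qed.
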